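(* There exist absolute constants $C,c>0$ such that for every integer $v\ge0$ and real $\lambda\ge\frac12$: \begin{enumerate} \item if $v\ge\lambda$, then $c(v+\lambda)^{-1}\exp(\Psi_{v,\lambda})\le E_{v,\lambda}\le C(v+\lambda)\exp(\Psi_{v,\lambda})$; \item if $v\le\lambda$, then $c(v+\lambda)^{-1}\exp(\Psi_{v,\lambda})\le E_{v,\lambda}\le C\lambda^{-1/2}\exp(\Psi_{v,\lambda})$. \end{enumerate}
   Context: For integer $v\ge0$ and real $\lambda>0$ define $E_{v,\lambda}=\sum_{n\ge v,\ n-v\in2\mathbb{Z}}\frac{\lambda^n}{2^n n!}\binom{n}{(n-v)/2}$ and $\Psi_{v,\lambda}=\sqrt{v^2+\lambda^2}+v\log\Big(\frac{\sqrt{v^2+\lambda^2}-v}{\lambda}\Big)$ (natural logarithm). *)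

From Stdlib Require Import Reals Lra Lia.
From Coquelicot Require Import Coquelicot.
Open Scope R_scope.

(* k-th term of E_{v,lambda}: the summation index is n = v + 2k (n >= v, n - v even),
   and (n - v)/2 = k. *)
Definition E_term (v : nat) (lam : R) (k : nat) : R :=
  let n := (v + 2 * k)%nat in
  lam ^ n / (2 ^ n * INR (Factorial.fact n)) * Binomial.C n k.

Definition E (v : nat) (lam : R) : R := Series (E_term v lam).

Definition Psi (v : nat) (lam : R) : R :=
  sqrt (INR v ^ 2 + lam ^ 2) + INR v * ln ((sqrt (INR v ^ 2 + lam ^ 2) - INR v) / lam).

From Stdlib Require Import Reals Lra Lia.
From Coquelicot Require Import Coquelicot.
Open Scope R_scope.

(** With s = sqrt (v^2 + lam^2), x = (s + v)/2 and y = (s - v)/2 one has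
    x y = lam^2/4 and x - y = v, so that
      E_{v,lam} = (2y/lam)^v * sum_k x^(v+k)/(v+k)! * y^k/k!   and
      exp Psi_{v,lam} = (2y/lam)^v * e^x * e^y.
    By Stirling's bounds n^n sqrt n e^-n <= n! <= e n^n sqrt n e^-n, the Poisson
    weight x^m/m! is at most sqrt (2/x) e^x for every m, which sums to the upper
    bound 2 lam^(-1/2) exp Psi; and it is at least e^(x-2)/sqrt (x+1) at m = floor x,
    so the single term k = floor y gives the lower bound, as
    (x+1)(y+1) <= 9 (v + lam)^2. *)

Lemma exp_le_exp x y : x <= y -> exp x <= exp y.
Proof. intros [H| ->]; [apply Rlt_le, exp_increasing, H | lra]. Qed.

Lemma exp_div_sqrt a t : 0 < t -> exp a / sqrt t = exp (a - ln t / 2).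
Proof.
intros Ht. rewrite <- Rpower_sqrt by exact Ht. unfold Rpower, Rminus, Rdiv.
rewrite exp_plus, exp_Ropp. do 3 f_equal. ring.
Qed.

Lemma nonneg_of_derive_nonneg (f df : R -> R) :
  f 0 = 0 ->
  (forall x, 0 <= x -> is_derive f x (df x)) ->
  (forall x, 0 <= x -> 0 <= df x) ->
  forall z, 0 <= z -> 0 <= f z.
Proof.
intros H0 Hd Hp z Hz.
destruct (Req_dec z 0) as [-> | Hz0]; [lra |].
destruct (MVT_cor3 f df 0 z) as (c & Hc0 & Hcz & Hfz); [lra | |].
- intros t Ht _. apply is_derive_Reals, Hd, Ht.
- rewrite Hfz, H0. specialize (Hp c Hc0). nra.
Qed.

Lemma ln_1p_ge z : 0 <= z -> 2 * z / (2 + z) <= ln (1 + z).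
Proof.
intros Hz.
enough (0 <= ln (1 + z) - 2 * z / (2 + z)) by lra.
refine (nonneg_of_derive_nonneg (fun t => ln (1 + t) - 2 * t / (2 + t))
  (fun t => t ^ 2 / ((1 + t) * (2 + t) ^ 2)) _ _ _ z Hz).
- rewrite Rplus_0_r, ln_1. field.
- intros t Ht. auto_derive; [lra | field; lra].
- intros t Ht. apply Rdiv_le_0_compat; [nra | apply Rmult_lt_0_compat; nra].
Qed.

Lemma ln_1p_le z : 0 <= z -> ln (1 + z) <= z - z ^ 2 / 2 + z ^ 3 / 3.
Proof.
intros Hz.
enough (0 <= z - z ^ 2 / 2 + z ^ 3 / 3 - ln (1 + z)) by lra.
refine (nonneg_of_derive_nonneg (fun t => t - t ^ 2 / 2 + t ^ 3 / 3 - ln (1 + t))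
  (fun t => t ^ 3 / (1 + t)) _ _ _ z Hz).
- rewrite Rplus_0_r, ln_1. field.
- intros t Ht. auto_derive; [lra | field; lra].
- intros t Ht. apply Rdiv_le_0_compat; [nra | lra].
Qed.

Lemma ln_1p_inv_bounds (m : nat) : (1 <= m)%nat ->
  1 <= (INR m + / 2) * ln (1 + / INR m) <= 1 + / (2 * INR m * (INR m + 1)).
Proof.
intros Hm.
assert (Hm1 : 1 <= INR m) by (apply (le_INR 1); exact Hm).
set (z := / INR m).
assert (Hz : 0 < z <= 1).
{ split; [apply Rinv_0_lt_compat; lra |].
  rewrite <- Rinv_1. apply Rinv_le_contravar; lra. }
assert (Hmz : INR m = / z) by (unfold z; rewrite Rinv_inv; reflexivity).
rewrite Hmz. split.
- apply Rle_trans with ((/ z + / 2) * (2 * z / (2 + z))).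
  + right. field. lra.
  + apply Rmult_le_compat_l; [| apply ln_1p_ge]; lra.
- apply Rle_trans with ((/ z + / 2) * (z - z ^ 2 / 2 + z ^ 3 / 3)).
  + apply Rmult_le_compat_l; [| apply ln_1p_le]; lra.
  + replace ((/ z + / 2) * (z - z ^ 2 / 2 + z ^ 3 / 3)) with (1 + z ^ 2 / 12 + z ^ 3 / 6)
      by (field; lra).
    replace (/ (2 * / z * (/ z + 1))) with (z ^ 2 / (2 * (1 + z))) by (field; lra).
    enough (z ^ 2 / 12 + z ^ 3 / 6 <= z ^ 2 / (2 * (1 + z))) by lra.
    apply Rmult_le_reg_r with (12 * (1 + z)); [lra |].
    assert (z ^ 3 <= z ^ 2) by nra. assert (z ^ 4 <= z ^ 2) by nra.
    field_simplify; lra.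
Qed.

(* Stirling's formula without the constant sqrt (2 pi); the extra [/ (2 n)] is what
   makes the lower bound survive the induction. *)
Lemma ln_fact_bounds (n : nat) : (1 <= n)%nat ->
  (INR n + / 2) * ln (INR n) - INR n + / (2 * INR n) <= ln (INR (Factorial.fact n)) <=
  (INR n + / 2) * ln (INR n) - INR n + 1.
Proof.
intros Hn. induction Hn as [| n Hn [IHlo IHup]].
- change (INR (Factorial.fact 1)) with 1. change (INR 1) with 1. rewrite ln_1. lra.
- assert (Hm : 1 <= INR n) by (apply (le_INR 1); exact Hn).
  destruct (ln_1p_inv_bounds n Hn) as [Dlo Dup].
  assert (Hinv : 0 < / INR n) by (apply Rinv_0_lt_compat; lra).
  rewrite fact_simpl, mult_INR, S_INR, ln_mult by (apply INR_fact_lt_0 || lra).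
  assert (Hsucc : ln (INR n + 1) = ln (INR n) + ln (1 + / INR n)).
  { rewrite <- ln_mult by lra. f_equal. field. lra. }
  assert (Htel : / (2 * INR n) - / (2 * INR n * (INR n + 1)) = / (2 * (INR n + 1)))
    by (field; lra).
  rewrite Hsucc. split; lra.
Qed.

Definition poisson_weight (x : R) (m : nat) : R := x ^ m / INR (Factorial.fact m).

Lemma poisson_weight_nonneg x m : 0 <= x -> 0 <= poisson_weight x m.
Proof.
intros Hx. apply Rdiv_le_0_compat; [apply pow_le, Hx | apply INR_fact_lt_0].
Qed.

Lemma poisson_weight_succ x m :
  poisson_weight x (S m) = poisson_weight x m * (x / INR (S m)).
Proof.
unfold poisson_weight. rewrite fact_simpl, mult_INR, <- tech_pow_Rmult.
field. split; [apply not_0_INR; lia | apply INR_fact_neq_0].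
Qed.

Lemma poisson_weight_exp x m : 0 < x ->
  poisson_weight x m = exp (INR m * ln x - ln (INR (Factorial.fact m))).
Proof.
intros Hx. unfold poisson_weight, Rminus.
rewrite exp_plus, exp_Ropp, exp_ln by apply INR_fact_lt_0.
rewrite <- Rpower_pow by exact Hx. reflexivity.
Qed.

Lemma is_series_poisson_weight x : is_series (poisson_weight x) (exp x).
Proof.
apply (is_series_ext (fun n => / INR (Factorial.fact n) * x ^ n)).
- intros n. apply Rmult_comm.
- apply is_pseries_R, is_exp_Reals.
Qed.

Lemma poisson_weight_le_exp_div_sqrt x j : 0 < x -> (1 <= j)%nat ->
  poisson_weight x j <= exp x / sqrt (INR j).
Proof.
intros Hx Hj.
assert (HJ : 1 <= INR j) by (apply (le_INR 1); exact Hj).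
rewrite poisson_weight_exp, exp_div_sqrt by lra.
apply exp_le_exp.
destruct (ln_fact_bounds j Hj) as [Hlo _].
assert (Hinv : 0 < / (2 * INR j)) by (apply Rinv_0_lt_compat; lra).
assert (Hlog : ln x = ln (INR j) + ln (x / INR j)) by (rewrite ln_div; lra).
assert (Hu : ln (x / INR j) <= x / INR j - 1).
{ generalize (exp_ineq1_le (ln (x / INR j))).
  rewrite exp_ln by (apply Rdiv_lt_0_compat; lra). lra. }
assert (Hju : INR j * ln (x / INR j) <= x - INR j).
{ replace (x - INR j) with (INR j * (x / INR j - 1)) by (field; lra).
  apply Rmult_le_compat_l; lra. }
rewrite Hlog. lra.
Qed.

Lemma poisson_weight_incr x m d : INR (m + d) <= x ->
  poisson_weight x m <= poisson_weight x (m + d).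
Proof.
induction d as [| d IH]; intros Hd.
- rewrite Nat.add_0_r. lra.
- rewrite Nat.add_succ_r in *. rewrite S_INR in Hd.
  assert (HS : 0 < INR (S (m + d))) by (apply lt_0_INR; lia).
  assert (Hstep : 1 <= x / INR (S (m + d))).
  { apply Rmult_le_reg_r with (INR (S (m + d))); [exact HS |].
    unfold Rdiv. rewrite Rmult_assoc, Rinv_l by lra. rewrite S_INR. lra. }
  assert (Hpos := poisson_weight_nonneg x (m + d) ltac:(pose proof (pos_INR (m + d)); lra)).
  rewrite poisson_weight_succ.
  apply Rle_trans with (1 := IH ltac:(lra)).
  rewrite <- (Rmult_1_r (poisson_weight x (m + d))) at 1.
  apply Rmult_le_compat_l; assumption.
Qed.

Lemma poisson_weight_le x m : 1 / 4 <= x ->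
  poisson_weight x m <= sqrt 2 / sqrt x * exp x.
Proof.
intros Hx.
assert (Hsx : 0 < sqrt x) by (apply sqrt_lt_R0; lra).
assert (Hex := exp_pos x).
assert (near_mode : forall j, x / 2 <= INR j -> poisson_weight x j <= sqrt 2 / sqrt x * exp x).
{ intros j Hj.
  assert (Hj1 : (1 <= j)%nat) by (destruct j; [simpl in Hj; lra | lia]).
  assert (HJ : 1 <= INR j) by (apply (le_INR 1); exact Hj1).
  assert (Hsj : 0 < sqrt (INR j)) by (apply sqrt_lt_R0; lra).
  assert (sqrt x <= sqrt 2 * sqrt (INR j)).
  { rewrite <- sqrt_mult by lra. apply sqrt_le_1_alt. lra. }
  apply Rle_trans with (1 := poisson_weight_le_exp_div_sqrt x j ltac:(lra) Hj1).
  apply Rmult_le_reg_r with (sqrt x * sqrt (INR j)); [nra |].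
  field_simplify; nra. }
destruct (Rle_or_lt (x / 2) (INR m)) as [Hm | Hm]; [exact (near_mode m Hm) |].
destruct (Rlt_or_le x 2) as [Hx2 | Hx2].
- assert (Hm0 : m = 0%nat).
  { destruct m; [reflexivity |]. rewrite S_INR in Hm. pose proof (pos_INR m). lra. }
  subst m. unfold poisson_weight. simpl. rewrite Rdiv_1_r.
  assert (sqrt x <= sqrt 2) by (apply sqrt_le_1_alt; lra).
  assert (1 <= exp x) by (rewrite <- exp_0; apply exp_le_exp; lra).
  apply Rmult_le_reg_r with (sqrt x); [exact Hsx |].
  field_simplify; nra.
- destruct (nfloor_ex x ltac:(lra)) as [n [Hn1 Hn2]].
  assert (Hmn : (m <= n)%nat) by (apply INR_le; lra).
  replace n with (m + (n - m))%nat in Hn1, Hn2 by lia.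
  apply Rle_trans with (1 := poisson_weight_incr x m (n - m) Hn1).
  apply near_mode. lra.
Qed.

Lemma poisson_weight_ge z n : INR n <= z < INR n + 1 ->
  exp (z - 2) / sqrt (z + 1) <= poisson_weight z n.
Proof.
intros [Hn1 Hn2].
pose proof (pos_INR n) as Hn0.
assert (Hlnz1 : 0 <= ln (z + 1)) by (rewrite <- ln_1; apply ln_le; lra).
rewrite exp_div_sqrt by lra.
destruct n as [| n].
- unfold poisson_weight. simpl. rewrite Rdiv_1_r.
  simpl in Hn2. rewrite <- exp_0 at 2. apply exp_le_exp. lra.
- assert (HN : 1 <= INR (S n)) by (apply (le_INR 1); lia).
  rewrite poisson_weight_exp by lra.
  apply exp_le_exp.
  destruct (ln_fact_bounds (S n) ltac:(lia)) as [_ Hup].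
  assert (Hlnz : ln (INR (S n)) <= ln z) by (apply ln_le; lra).
  assert (Hlnz1' : ln (INR (S n)) <= ln (z + 1)) by (apply ln_le; lra).
  assert (INR (S n) * ln (INR (S n)) <= INR (S n) * ln z) by (apply Rmult_le_compat_l; lra).
  lra.
Qed.

Lemma Series_ge_term (a : nat -> R) k :
  (forall n, 0 <= a n) -> ex_series a -> a k <= Series a.
Proof.
intros Ha Hex.
rewrite (Series_incr_n a (S k)) by (lia || exact Hex). simpl pred.
assert (Htail : 0 <= Series (fun n => a (S k + n)%nat)).
{ assert (Hle := Series_le (fun n => 0 * a (S k + n)%nat) (fun n => a (S k + n)%nat)).
  rewrite Series_scal_l, Rmult_0_l in Hle. apply Hle.
  - intros n. rewrite Rmult_0_l. split; [lra | apply Ha].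
  - apply (ex_series_incr_n a (S k)), Hex. }
destruct k as [| k]; simpl sum_f_R0.
- lra.
- pose proof (cond_pos_sum a k Ha). lra.
Qed.

Lemma E_term_factor v lam x y k : 0 < lam -> x * y = lam ^ 2 / 4 ->
  E_term v lam k = (2 * y / lam) ^ v * poisson_weight x (v + k) * poisson_weight y k.
Proof.
intros Hlam Hxy.
assert (Hpow : (2 * y / lam) ^ v * x ^ (v + k) * y ^ k = (lam / 2) ^ (v + 2 * k)).
{ assert (Hyx : 2 * y / lam * x = lam / 2).
  { replace (2 * y / lam * x) with (2 * (x * y) / lam) by (field; lra).
    rewrite Hxy. field. lra. }
  rewrite !pow_add, pow_mult.
  replace ((2 * y / lam) ^ v * (x ^ v * x ^ k) * y ^ k)
    with ((2 * y / lam * x) ^ v * (x * y) ^ k) by (rewrite !Rpow_mult_distr; ring).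
  rewrite Hyx, Hxy. f_equal. f_equal. field. }
unfold E_term, poisson_weight, Binomial.C.
replace (v + 2 * k - k)%nat with (v + k)%nat by lia.
pose proof (INR_fact_neq_0 (v + 2 * k)). pose proof (INR_fact_neq_0 (v + k)).
pose proof (INR_fact_neq_0 k).
transitivity ((lam / 2) ^ (v + 2 * k) / (INR (Factorial.fact (v + k)) * INR (Factorial.fact k))).
- replace ((lam / 2) ^ (v + 2 * k)) with (lam ^ (v + 2 * k) / 2 ^ (v + 2 * k))
    by (unfold Rdiv; rewrite Rpow_mult_distr, pow_inv; reflexivity).
  field. repeat split; auto. apply pow_nonzero. lra.
- rewrite <- Hpow. field. auto.
Qed.

Section SaddlePoint.

Variables (v : nat) (lam : R).
Hypothesis lam_ge_half : 1 / 2 <= lam.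

Let s := sqrt (INR v ^ 2 + lam ^ 2).
Let x := (s + INR v) / 2.
Let y := (s - INR v) / 2.
Let c0 := (2 * y / lam) ^ v.

Let s_bounds : INR v < s /\ lam <= s <= INR v + lam.
Proof.
pose proof (pos_INR v).
assert (Hs0 : 0 <= s) by apply sqrt_pos.
assert (Hss : s * s = INR v ^ 2 + lam ^ 2) by (apply sqrt_sqrt; nra).
repeat split; nra.
Qed.

Let y_pos : 0 < y.
Proof. unfold y. pose proof s_bounds. lra. Qed.

Let x_eq : x = INR v + y.
Proof. unfold x, y. lra. Qed.

Let x_ge : lam / 2 <= x.
Proof. unfold x. pose proof (pos_INR v). pose proof s_bounds. lra. Qed.

Let xy_eq : x * y = lam ^ 2 / 4.
Proof.
unfold x, y.
replace ((s + INR v) / 2 * ((s - INR v) / 2)) with ((s * s - INR v ^ 2) / 4) by field.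
unfold s. rewrite sqrt_sqrt by (pose proof (pos_INR v); nra). field.
Qed.

Let c0_pos : 0 < c0.
Proof. apply pow_lt, Rdiv_lt_0_compat; lra. Qed.

Let exp_Psi_factor : exp (Psi v lam) = c0 * exp x * exp y.
Proof.
unfold Psi. fold s.
replace ((s - INR v) / lam) with (2 * y / lam) by (unfold y; field; lra).
replace (s + INR v * ln (2 * y / lam)) with (INR v * ln (2 * y / lam) + x + y)
  by (unfold x, y; field).
rewrite !exp_plus. unfold c0.
rewrite <- Rpower_pow by (apply Rdiv_lt_0_compat; lra). reflexivity.
Qed.

Let E_term_eq k :
  E_term v lam k = c0 * poisson_weight x (v + k) * poisson_weight y k.
Proof. apply E_term_factor; lra. Qed.

Let E_term_nonneg k : 0 <= E_term v lam k.
Proof.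
rewrite E_term_eq.
pose proof (poisson_weight_nonneg x (v + k)). pose proof (poisson_weight_nonneg y k).
apply Rmult_le_pos; [apply Rmult_le_pos |]; lra.
Qed.

Let peak := c0 * (sqrt 2 / sqrt x * exp x).

Let E_term_le k : E_term v lam k <= peak * poisson_weight y k.
Proof.
rewrite E_term_eq. unfold peak.
pose proof (poisson_weight_nonneg y k).
apply Rmult_le_compat_r; [lra |].
apply Rmult_le_compat_l; [lra | apply poisson_weight_le; lra].
Qed.

Let is_series_dominant : is_series (fun k => peak * poisson_weight y k) (peak * exp y).
Proof. exact (is_series_scal_l peak _ _ (is_series_poisson_weight y)). Qed.

Let ex_series_E_term : ex_series (E_term v lam).
Proof.
apply (ex_series_le (V := R_CompleteNormedModule) _ (fun k => peak * poisson_weight y k)).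
- intros k. change (norm (E_term v lam k)) with (Rabs (E_term v lam k)).
  rewrite Rabs_pos_eq by apply E_term_nonneg. apply E_term_le.
- eexists. exact is_series_dominant.
Qed.

Lemma E_le_div_sqrt_exp_Psi : E v lam <= 2 / sqrt lam * exp (Psi v lam).
Proof.
apply Rle_trans with (peak * exp y).
{ rewrite <- (is_series_unique _ _ is_series_dominant).
  apply Series_le; [| eexists; exact is_series_dominant].
  intros k. split; [apply E_term_nonneg | apply E_term_le]. }
assert (Hsx : 0 < sqrt x) by (apply sqrt_lt_R0; lra).
assert (Hsl : 0 < sqrt lam) by (apply sqrt_lt_R0; lra).
assert (Hs2 : sqrt 2 * sqrt 2 = 2) by (apply sqrt_sqrt; lra).
assert (Hlx : sqrt lam <= sqrt 2 * sqrt x)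
  by (rewrite <- sqrt_mult by lra; apply sqrt_le_1_alt; lra).
assert (Hratio : sqrt 2 / sqrt x <= 2 / sqrt lam).
{ apply Rmult_le_reg_r with (sqrt x * sqrt lam); [nra |].
  field_simplify; nra. }
rewrite exp_Psi_factor. unfold peak.
replace (c0 * (sqrt 2 / sqrt x * exp x) * exp y)
  with (sqrt 2 / sqrt x * (c0 * exp x * exp y)) by ring.
apply Rmult_le_compat_r; [| exact Hratio].
pose proof (exp_pos x). pose proof (exp_pos y).
apply Rmult_le_pos; [apply Rmult_le_pos |]; lra.
Qed.

Lemma E_ge_div_exp_Psi : exp (-4) / 3 / (INR v + lam) * exp (Psi v lam) <= E v lam.
Proof.
destruct (nfloor_ex y ltac:(lra)) as [k Hk].
apply Rle_trans with (2 := Series_ge_term _ k E_term_nonneg ex_series_E_term).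
rewrite E_term_eq.
assert (Hxk : INR (v + k) <= x < INR (v + k) + 1) by (rewrite plus_INR; lra).
assert (Lx := poisson_weight_ge x (v + k) Hxk).
assert (Ly := poisson_weight_ge y k Hk).
assert (Hsx : 1 <= sqrt (x + 1)) by (rewrite <- sqrt_1 at 1; apply sqrt_le_1_alt; lra).
assert (Hsy : 1 <= sqrt (y + 1)) by (rewrite <- sqrt_1 at 1; apply sqrt_le_1_alt; lra).
assert (Hroot : sqrt (x + 1) * sqrt (y + 1) <= 3 * (INR v + lam)).
{ pose proof (pos_INR v). pose proof s_bounds.
  rewrite <- sqrt_mult, <- (sqrt_square (3 * (INR v + lam))) by lra.
  apply sqrt_le_1_alt.
  replace ((x + 1) * (y + 1)) with (x * y + (x + y) + 1) by ring.
  rewrite xy_eq. replace (x + y) with s by (unfold x, y; field). nra. }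
pose proof (exp_pos (x - 2)). pose proof (exp_pos (y - 2)).
apply Rle_trans with (c0 * (exp (x - 2) / sqrt (x + 1)) * (exp (y - 2) / sqrt (y + 1))).
2: { apply Rmult_le_compat; try (apply Rdiv_le_0_compat; lra).
     - apply Rmult_le_pos; [lra | apply Rdiv_le_0_compat; lra].
     - apply Rmult_le_compat_l; lra.
     - exact Ly. }
replace (c0 * (exp (x - 2) / sqrt (x + 1)) * (exp (y - 2) / sqrt (y + 1)))
  with (exp (-4) * (c0 * exp x * exp y) / (sqrt (x + 1) * sqrt (y + 1))).
2: { unfold Rminus. rewrite !exp_plus.
     replace (-4) with (- (2) + - (2)) by ring. rewrite exp_plus. field. lra. }
rewrite <- exp_Psi_factor.
assert (HP := exp_pos (Psi v lam)). assert (H4 := exp_pos (-4)).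
pose proof (pos_INR v).
replace (exp (-4) / 3 / (INR v + lam) * exp (Psi v lam))
  with (exp (-4) * exp (Psi v lam) / (3 * (INR v + lam))) by (field; lra).
unfold Rdiv. apply Rmult_le_compat_l; [nra |].
apply Rinv_le_contravar; nra.
Qed.

End SaddlePoint.

Theorem proposition4p2 :
  exists C c : R, 0 < C /\ 0 < c /\
    forall (v : nat) (lam : R), 1 / 2 <= lam ->
      (INR v >= lam ->
         c / (INR v + lam) * exp (Psi v lam) <= E v lam /\
         E v lam <= C * (INR v + lam) * exp (Psi v lam)) /\
      (INR v <= lam ->
         c / (INR v + lam) * exp (Psi v lam) <= E v lam /\
         E v lam <= C / sqrt lam * exp (Psi v lam)).
Proof.
exists 4, (exp (-4) / 3).
split; [lra |]. split; [pose proof (exp_pos (-4)); lra |].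
intros v lam Hlam.
pose proof (E_le_div_sqrt_exp_Psi v lam Hlam) as Hup.
pose proof (E_ge_div_exp_Psi v lam Hlam) as Hlo.
pose proof (exp_pos (Psi v lam)).
assert (Hsqrt : 1 / 2 <= sqrt lam).
{ rewrite <- (sqrt_square (1 / 2)) by lra. apply sqrt_le_1_alt. lra. }
assert (Hinv : / sqrt lam <= 2).
{ replace 2 with (/ (1 / 2)) by field. apply Rinv_le_contravar; lra. }
assert (0 < / sqrt lam) by (apply Rinv_0_lt_compat; lra).
split; intros Hv; split; try exact Hlo;
  apply Rle_trans with (1 := Hup); apply Rmult_le_compat_r; unfold Rdiv; lra.
Qed.
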